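(* Let $X^*$ be an optimal solution of the program defining $\vartheta^+(G)$. Then $X^*e=\vartheta^+(G)\operatorname{diag}(X^* )$.
   Context: Let $G$ be a simple graph with vertex set $V=\{1,\dots,n\}$ and edge set $E$; $e$ is the all-ones vector and $X\geq 0$ means entrywise nonnegativity. Schrijver's number is $$\vartheta^+(G)=\max\ \operatorname{trace}(X)\ \text{ s.t. } X-xx^T\succeq 0,\ \operatorname{diag}(X)=x,\ X_{i,j}=0\ \forall [i,j]\in E,\ X\geq 0,$$ which equals $\max \langle J,X\rangle$ s.t. $X\succeq 0$, $\operatorname{trace}(X)=1$, $X_{i,j}=0$ for $[i,j]\in E$, $X\geq 0$, where $J$ is the all-ones matrix. *)

From mathcomp Require Import all_boot all_order all_algebra.
Set Implicit Arguments. Unset Strict Implicit. Unset Printing Implicit Defensive.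
Import Order.TTheory GRing.Theory Num.Theory.
Local Open Scope ring_scope.

Definition psd (R : realFieldType) (n : nat) (A : 'M[R]_n) : Prop :=
  A^T = A /\ forall v : 'cV[R]_n, 0 <= (v^T *m A *m v) 0 0.

Definition simple_graph (n : nat) (E : rel 'I_n) : Prop :=
  symmetric E /\ irreflexive E.

Definition ones (R : realFieldType) (n : nat) : 'cV[R]_n := const_mx 1.

Definition diagv (R : realFieldType) (n : nat) (X : 'M[R]_n) : 'cV[R]_n :=
  \col_i X i i.

(* Feasibility for the program defining Schrijver's theta^+(G):
   X - x x^T psd, diag(X) = x, X_ij = 0 for [i,j] in E, X >= 0. *)
Definition theta_plus_feasible (R : realFieldType) (n : nat) (E : rel 'I_n)
    (X : 'M[R]_n) (x : 'cV[R]_n) : Prop :=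
  [/\ psd (X - x *m x^T),
      diagv X = x,
      (forall i j, E i j -> X i j = 0)
    & (forall i j, 0 <= X i j)].

Definition theta_plus_optimal (R : realFieldType) (n : nat) (E : rel 'I_n)
    (X : 'M[R]_n) (x : 'cV[R]_n) : Prop :=
  theta_plus_feasible E X x /\
  forall (Y : 'M[R]_n) (y : 'cV[R]_n), theta_plus_feasible E Y y -> \tr Y <= \tr X.

From mathcomp Require Import all_boot all_order all_algebra.
From mathcomp Require Import ring lra.
Set Implicit Arguments. Unset Strict Implicit. Unset Printing Implicit Defensive.
Import Order.TTheory GRing.Theory Num.Theory.
Local Open Scope ring_scope.

(* Let X be feasible with t = tr X, y = X e and s = e^T X e.  Feasibility makes
   X positive semidefinite and gives t^2 <= s.  For p_i = y_i / X_ii the matrix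
   Y_ij = p_i p_j X_ij / s is again feasible (by Cauchy-Schwarz for X) with
   tr Y = (sum_i p_i y_i) / s, so optimality of X gives sum_i p_i y_i <= t s.
   Hence sum_i X_ii (p_i - t)^2 = sum_i p_i y_i - 2 t s + t^3 <= t (t^2 - s) <= 0,
   which forces p_i = t wherever X_ii > 0, i.e. y = t diag(X). *)

Section BilinearForm.
Variables (R : realFieldType) (n : nat).
Implicit Types (A : 'M[R]_n) (u w : 'I_n -> R).

Definition bform A u w := \sum_i \sum_j u i * A i j * w j.

Definition rowsum A i := \sum_j A i j.

Definition delta (k : 'I_n) : 'I_n -> R := fun l => (l == k)%:R.

Lemma bform_mx A (v : 'cV[R]_n) :
  (v^T *m A *m v) 0 0 = bform A (fun i => v i 0) (fun i => v i 0).
Proof.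
rewrite mxE /bform exchange_big /=; apply: eq_bigr => j _.
by rewrite mxE mulr_suml; apply: eq_bigr => i _; rewrite mxE.
Qed.

Lemma bform_subr_rank1 A (x : 'cV[R]_n) u :
  bform (A - x *m x^T) u u = bform A u u - (\sum_i x i 0 * u i) ^+ 2.
Proof.
rewrite /bform expr2 mulr_suml -sumrB; apply: eq_bigr => i _.
rewrite mulr_sumr -sumrB; apply: eq_bigr => j _.
by rewrite !mxE big_ord1 !mxE; ring.
Qed.

Lemma sum_delta (F : 'I_n -> R) k : \sum_l delta k l * F l = F k.
Proof.
rewrite (bigD1 k) //= /delta eqxx mul1r big1 ?addr0 // => l /negbTE ->.
by rewrite mul0r.
Qed.

Lemma bform_delta A i j : bform A (delta i) (delta j) = A i j.
Proof.
rewrite /bform (eq_bigr (fun k => delta i k * \sum_l A k l * delta j l)).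
  rewrite sum_delta (eq_bigr (fun l => delta j l * A i l)) ?sum_delta //.
  by move=> l _; rewrite mulrC.
by move=> k _; rewrite mulr_sumr; apply: eq_bigr => l _; rewrite mulrA.
Qed.

Lemma bform1l A w : (forall i j, A i j = A j i) ->
  bform A (fun=> 1) w = \sum_j rowsum A j * w j.
Proof.
move=> symA; rewrite /bform exchange_big; apply: eq_bigr => j _.
by rewrite mulr_suml; apply: eq_bigr => i _; rewrite mul1r symA.
Qed.

Lemma bform11 A : bform A (fun=> 1) (fun=> 1) = \sum_i rowsum A i.
Proof. by apply: eq_bigr => i _; apply: eq_bigr => j _; rewrite mul1r mulr1. Qed.

Section PositiveSemidefinite.
Variable A : 'M[R]_n.
Hypothesis symA : forall i j, A i j = A j i.
Hypothesis bform_ge0 : forall u, 0 <= bform A u u.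

Lemma bformC u w : bform A w u = bform A u w.
Proof.
rewrite /bform exchange_big; apply: eq_bigr => i _.
by apply: eq_bigr => j _; rewrite symA; ring.
Qed.

Lemma bform_lincomb u w a b :
  bform A (fun i => a * u i + b * w i) (fun i => a * u i + b * w i) =
  a ^+ 2 * bform A u u + 2 * a * b * bform A u w + b ^+ 2 * bform A w w.
Proof.
have -> : 2 * a * b * bform A u w = a * b * (bform A u w + bform A w u).
  by rewrite bformC; ring.
rewrite /bform -big_split /= !mulr_sumr -!big_split /=; apply: eq_bigr => i _.
by rewrite -big_split /= !mulr_sumr -!big_split /=; apply: eq_bigr => j _; ring.
Qed.

(* The form at a u - b w equals a (a c - b^2); when a = 0 the other two
   combinations force b = 0. *)
Lemma bform_CauchySchwarz u w :
  bform A u w ^+ 2 <= bform A u u * bform A w w.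
Proof.
set a := bform A w w; set b := bform A u w; set c := bform A u u.
have ha : 0 <= a := bform_ge0 w.
have hc : 0 <= c := bform_ge0 u.
have h1 := bform_ge0 (fun i => a * u i + (- b) * w i).
have h2 := bform_ge0 (fun i => (- b) * u i + c * w i).
have h3 := bform_ge0 (fun i => 1 * u i + (- b) * w i).
rewrite bform_lincomb -/a -/b -/c in h1.
rewrite bform_lincomb -/a -/b -/c in h2.
rewrite bform_lincomb -/a -/b -/c in h3.
have [a0|a_neq0] := eqVneq a 0; last first.
  have a_gt0 : 0 < a by rewrite lt_def a_neq0 ha.
  nra.
rewrite a0 mulr0; move: h2 h3; rewrite a0.
have [->|c_neq0] := eqVneq c 0; last first.
  have c_gt0 : 0 < c by rewrite lt_def c_neq0 hc.
  nra.
nra.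
Qed.

Lemma psd_diag0_row0 i j : A i i = 0 -> A i j = 0.
Proof.
move=> Aii0; have := bform_CauchySchwarz (delta i) (delta j).
rewrite !bform_delta Aii0 mul0r => le0.
by apply/eqP; rewrite -sqrf_eq0 eq_le le0 sqr_ge0.
Qed.

End PositiveSemidefinite.

Lemma psd_bform A : psd A ->
  (forall i j, A i j = A j i) /\ forall u, 0 <= bform A u u.
Proof.
case=> /matrixP symA posA; split=> [i j|u]; first by rewrite -[LHS]symA mxE.
rewrite (_ : bform A u u = (((\col_i u i)^T *m A *m \col_i u i) 0 0)) //.
rewrite bform_mx; apply: eq_bigr => i _; apply: eq_bigr => j _; by rewrite !mxE.
Qed.

Lemma mulmx_ones A i : (A *m ones R n) i 0 = rowsum A i.
Proof. by rewrite mxE; apply: eq_bigr => j _; rewrite mxE mulr1. Qed.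

End BilinearForm.

Section ThetaPlusFeasible.
Variables (R : realFieldType) (n : nat) (E : rel 'I_n).
Variables (X : 'M[R]_n) (x : 'cV[R]_n).
Hypothesis feasX : theta_plus_feasible E X x.

Lemma feasible_diag i : x i 0 = X i i.
Proof. by case: feasX => _ <- _ _; rewrite mxE. Qed.

Lemma feasible_sqr_le_bform u : (\sum_i X i i * u i) ^+ 2 <= bform X u u.
Proof.
case: feasX => /psd_bform[_ /(_ u)] + _ _ _.
by rewrite bform_subr_rank1 subr_ge0; under eq_bigr do rewrite feasible_diag.
Qed.

Lemma feasible_sym i j : X i j = X j i.
Proof.
case: feasX => /psd_bform[/(_ i j) + _] _ _ _.
by rewrite !mxE !big_ord1 !mxE !feasible_diag mulrC => /subIr.
Qed.

Lemma feasible_bform_ge0 u : 0 <= bform X u u.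
Proof. exact: le_trans (sqr_ge0 _) (feasible_sqr_le_bform u). Qed.

Lemma feasible_trace_sqr : \tr X ^+ 2 <= \sum_i rowsum X i.
Proof.
rewrite -bform11; have := feasible_sqr_le_bform (fun=> 1).
by under eq_bigr do rewrite mulr1.
Qed.

Lemma feasible_diag0_row0 i j : X i i = 0 -> X i j = 0.
Proof. exact/psd_diag0_row0/feasible_bform_ge0/feasible_sym. Qed.

Lemma feasible_diag0_rowsum0 i : X i i = 0 -> rowsum X i = 0.
Proof. by move=> Xii0; apply: big1 => j _; apply: feasible_diag0_row0. Qed.

Definition rescale (p : 'I_n -> R) (s : R) : 'M[R]_n :=
  \matrix_(i, j) (p i * p j * X i j / s).

Section Rescaling.
Variables (p : 'I_n -> R) (s : R).
Hypothesis p_ge0 : forall i, 0 <= p i.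
Hypothesis p_diag : forall i, p i * X i i = rowsum X i.
Hypothesis s_def : s = \sum_i rowsum X i.
Hypothesis s_gt0 : 0 < s.

Lemma diag_rescale i : rescale p s i i = p i * rowsum X i / s.
Proof. by rewrite mxE -p_diag; ring. Qed.

Lemma trace_rescale : \tr (rescale p s) = (\sum_i p i * rowsum X i) / s.
Proof. by rewrite mulr_suml; apply: eq_bigr => i _; rewrite diag_rescale. Qed.

(* With w = p v, both v^T Y v and diag(Y)^T v are forms of X in w, and the
   psd condition becomes Cauchy-Schwarz for the vectors e and w. *)
Lemma rescale_psd : psd (rescale p s - diagv (rescale p s) *m (diagv (rescale p s))^T).
Proof.
split.
  apply/matrixP => i j; rewrite !mxE !big_ord1 !mxE feasible_sym; ring.
move=> v; rewrite bform_mx bform_subr_rank1.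
set u : 'I_n -> R := fun i => v i 0; pose w i := p i * u i.
have -> : bform (rescale p s) u u = bform X w w / s.
  rewrite /bform mulr_suml; apply: eq_bigr => i _; rewrite mulr_suml.
  by apply: eq_bigr => j _; rewrite mxE /w; ring.
have -> : \sum_i diagv (rescale p s) i 0 * u i = bform X (fun=> 1) w / s.
  rewrite bform1l; last exact: feasible_sym.
  by rewrite mulr_suml; apply: eq_bigr => i _; rewrite mxE diag_rescale /w; ring.
have cs := bform_CauchySchwarz feasible_sym feasible_bform_ge0 (fun=> 1) w.
rewrite bform11 -s_def in cs.
have -> : bform X w w / s - (bform X (fun=> 1) w / s) ^+ 2 =
          (s * bform X w w - bform X (fun=> 1) w ^+ 2) / s ^+ 2.
  by field; rewrite gt_eqF.
by rewrite divr_ge0 ?sqr_ge0 // subr_ge0.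
Qed.

Lemma rescale_feasible : theta_plus_feasible E (rescale p s) (diagv (rescale p s)).
Proof.
case: feasX => _ _ X_E X_ge0; split => //; first exact: rescale_psd.
  by move=> i j /X_E Xij0; rewrite mxE Xij0 mulr0 mul0r.
by move=> i j; rewrite mxE divr_ge0 ?mulr_ge0 ?p_ge0 ?X_ge0 ?ltW.
Qed.

End Rescaling.

Lemma sum_diag_dev_sqr (p : 'I_n -> R) (t : R) :
  (forall i, p i * X i i = rowsum X i) ->
  \sum_i X i i * (p i - t) ^+ 2 =
  \sum_i p i * rowsum X i - 2 * t * \sum_i rowsum X i + t ^+ 2 * \tr X.
Proof.
move=> p_diag; rewrite !mulr_sumr -sumrB -big_split /=.
by apply: eq_bigr => i _; rewrite -p_diag; ring.
Qed.

End ThetaPlusFeasible.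

Section ThetaPlusOptimal.
Variables (R : realFieldType) (n : nat) (E : rel 'I_n).
Variables (X : 'M[R]_n) (x : 'cV[R]_n).
Hypothesis optX : theta_plus_optimal E X x.

Let feasX : theta_plus_feasible E X x := optX.1.

(* Junk value 0 where X i i = 0; the whole row of X vanishes there. *)
Definition diag_ratio (i : 'I_n) : R := rowsum X i / X i i.

Lemma diag_ratioP i : diag_ratio i * X i i = rowsum X i.
Proof.
have [Xii0|Xii_neq0] := eqVneq (X i i) 0; last by rewrite divfK.
by rewrite Xii0 mulr0 (feasible_diag0_rowsum0 feasX).
Qed.

Lemma optimal_weighted_rowsum_le : 0 < \tr X ->
  \sum_i diag_ratio i * rowsum X i <= \tr X * \sum_i rowsum X i.
Proof.
move=> tr_gt0; set s := \sum_i rowsum X i.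
have s_gt0 : 0 < s by apply: lt_le_trans (feasible_trace_sqr feasX); rewrite exprn_gt0.
have ratio_ge0 i : 0 <= diag_ratio i.
  by case: feasX => _ _ _ X_ge0; rewrite divr_ge0 ?sumr_ge0.
have := optX.2 _ _ (rescale_feasible feasX ratio_ge0 diag_ratioP erefl s_gt0).
by rewrite trace_rescale ?ler_pdivrMr 1?mulrC //; exact: diag_ratioP.
Qed.

Lemma optimal_rowsum i : rowsum X i = \tr X * X i i.
Proof.
have X_ge0 j : 0 <= X j j by case: feasX => _ _ _.
have [tr0|tr_neq0] := eqVneq (\tr X) 0.
  have Xii0 : X i i = 0.
    by move/eqP: tr0; rewrite psumr_eq0 // => /allP/(_ i (mem_index_enum _))/eqP.
  by rewrite Xii0 mulr0 (feasible_diag0_rowsum0 feasX).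
have tr_gt0 : 0 < \tr X by rewrite lt_def tr_neq0 sumr_ge0.
have dev_ge0 j : 0 <= X j j * (diag_ratio j - \tr X) ^+ 2 by rewrite mulr_ge0 ?sqr_ge0.
have dev_le0 : \sum_j X j j * (diag_ratio j - \tr X) ^+ 2 <= 0.
  rewrite (sum_diag_dev_sqr _ diag_ratioP).
  have := optimal_weighted_rowsum_le tr_gt0.
  have : 0 <= \tr X * (\sum_j rowsum X j - \tr X ^+ 2).
    by rewrite mulr_ge0 ?subr_ge0 ?(feasible_trace_sqr feasX) ?ltW.
  lra.
have : \sum_j X j j * (diag_ratio j - \tr X) ^+ 2 == 0.
  by rewrite eq_le dev_le0 sumr_ge0.
rewrite psumr_eq0 // => /allP/(_ i (mem_index_enum _)).
rewrite mulf_eq0 sqrf_eq0 subr_eq0 => /orP[/eqP Xii0|/eqP ratio_tr].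
  by rewrite Xii0 mulr0 (feasible_diag0_rowsum0 feasX).
by rewrite -diag_ratioP ratio_tr mulrC.
Qed.

End ThetaPlusOptimal.

Theorem mainTheorem11 (R : rcfType) (n : nat) (E : rel 'I_n)
    (Xs : 'M[R]_n) (xs : 'cV[R]_n) :
  simple_graph E ->
  theta_plus_optimal E Xs xs ->
  Xs *m ones R n = \tr Xs *: diagv Xs.
Proof.
move=> _ optX; apply/matrixP => i j.
by rewrite (ord1 j) mulmx_ones !mxE (optimal_rowsum optX).
Qed.
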